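(* Let $N \geq \Delta \geq 2$ be integers. If $F$ is an acyclic graph with no isolated vertices, with $e(F)=N$, $\Delta(F)=\Delta$ and $e(L(F)) = g(N,\Delta)$, then $F$ is a tree.
   Context: All graphs are finite and simple; $L(F)$ is the line graph of $F$, $e(\cdot)$ the number of edges, $\Delta(\cdot)$ the maximum degree, $\delta(\cdot)$ the minimum degree. For integers $N \ge \Delta \ge 1$, $g(N,\Delta) = \max\{ e(L(F)) : F \text{ acyclic}, e(F)=N, \Delta(F)=\Delta, \delta(F)\geq 1\}$. *)

From mathcomp Require Import all_boot.
Set Implicit Arguments. Unset Strict Implicit. Unset Printing Implicit Defensive.

Section Graphs.
Variable V : finType.
Variable E : rel V.

Definition simple_graph : Prop := symmetric E /\ irreflexive E.

Definition edges : {set {set V}} :=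
  [set e : {set V} | [exists x, exists y, E x y && (e == [set x; y])]].

Definition num_edges : nat := #|edges|.

Definition deg (x : V) : nat := #|[set y | E x y]|.

Definition max_deg : nat := \max_(x : V) deg x.

Definition no_isolated : Prop := forall x : V, 0 < deg x.

Definition acyclic : Prop :=
  forall s : seq V, uniq s -> 3 <= size s -> ~~ cycle E s.

(* e(L(F)): edges of the line graph = unordered pairs of distinct edges of F
   sharing an endpoint *)
Definition line_edges : {set {set {set V}}} :=
  [set P : {set {set V}} | (P \subset edges) && (#|P| == 2) &&
     [exists e1 in P, exists e2 in P, (e1 != e2) && ~~ [disjoint e1 & e2]]].

Definition num_line_edges : nat := #|line_edges|.

Definition is_tree : Prop := acyclic /\ forall x y : V, connect E x y.

End Graphs.

Definition admissible (N D : nat) (V : finType) (E : rel V) : Prop :=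
  simple_graph E /\ acyclic E /\ num_edges E = N /\ max_deg E = D /\ no_isolated E.

(* "m = g(N, Delta)": m is the maximum of e(L(F)) over admissible F *)
Definition is_g (N D m : nat) : Prop :=
  (exists (V : finType) (E : rel V), admissible N D E /\ num_line_edges E = m) /\
  (forall (V : finType) (E : rel V), admissible N D E -> num_line_edges E <= m).

(* Suppose F is not connected.  Every component of a forest without isolated
   vertices contains a leaf, so there are leaves u and w in different
   components; let u' be the neighbour of u.  Deleting u and joining u' to w
   gives a forest F' with the same number of edges and no isolated vertex;
   its maximum degree is still Delta because only w gains a neighbour and
   its degree becomes 2 <= Delta.  Since e(L(F)) = sum_v C(d(v), 2), and the
   degrees change only at u (1 -> gone) and w (1 -> 2), e(L(F')) =
   e(L(F)) + 1, contradicting the maximality of e(L(F)). *)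

From mathcomp Require Import all_boot zify.
Set Implicit Arguments. Unset Strict Implicit. Unset Printing Implicit Defensive.

Section SimpleGraph.
Variables (V : finType) (E : rel V).
Hypothesis E_simple : simple_graph E.

Definition edges_at (v : V) := [set e in edges E | v \in e].

Definition edge_pairs_at (v : V) :=
  [set P : {set {set V}} | P \subset edges_at v & #|P| == 2].

Lemma card_edge e : e \in edges E -> #|e| = 2.
Proof.
case: E_simple => _ irr.
rewrite inE => /existsP[x /existsP[y /andP[Exy /eqP ->]]].
by rewrite cards2; case: eqP => // xy; rewrite xy irr in Exy.
Qed.

Lemma card_edges_at v : #|edges_at v| = deg E v.
Proof.
case: E_simple => sym irr.
have -> : edges_at v = (fun y => [set v; y]) @: [set y | E v y].
  apply/setP => e; rewrite !inE; apply/idP/imsetP.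
  - case/andP=> /existsP[x /existsP[y /andP[Exy /eqP ->]]].
    rewrite !inE => /orP[/eqP->|/eqP->]; first by exists y; rewrite ?inE.
    by exists x; [rewrite inE sym | rewrite setUC].
  - case=> y; rewrite inE => Evy ->; rewrite !inE eqxx andbT.
    by apply/existsP; exists v; apply/existsP; exists y; rewrite Evy eqxx.
rewrite card_in_imset // => y1 y2; rewrite !inE => Evy1 _ eq12.
have : y1 \in [set v; y2] by rewrite -eq12 !inE eqxx orbT.
by rewrite !inE => /orP[/eqP v_y1|/eqP //]; rewrite -v_y1 irr in Evy1.
Qed.

Lemma handshake : \sum_v deg E v = 2 * num_edges E.
Proof.
transitivity (\sum_v \sum_(e in edges E) (v \in e)).
  apply: eq_bigr => v _; rewrite -card_edges_at -sum1_card big_mkcond /=.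
  rewrite [RHS]big_mkcond; apply: eq_bigr => e _.
  by rewrite inE; case: (e \in edges E); case: (v \in e).
rewrite exchange_big /= mulnC -sum_nat_const; apply: eq_bigr => e eE.
rewrite -(card_edge eE) -sum1_card [RHS]big_mkcond /=.
by apply: eq_bigr => v _; case: (v \in e).
Qed.

Lemma edge_pairs_at_line_edge v P : P \in edge_pairs_at v -> P \in line_edges E.
Proof.
rewrite !inE => /andP[sub P2]; rewrite P2 andbT.
have at_v e : e \in P -> e \in edges E /\ v \in e by move/(subsetP sub)/setIdP.
apply/andP; split; first by apply/subsetP => e /at_v[].
case/cards2P: P2 at_v => e1 [e2 [e12 ->]] at_v.
have [[_ ve1] [_ ve2]] := (at_v e1 (set21 e1 e2), at_v e2 (set22 e1 e2)).
apply/existsP; exists e1; rewrite set21 /=; apply/existsP; exists e2; rewrite set22 e12 /=.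
by rewrite -setI_eq0; apply/set0Pn; exists v; rewrite inE ve1.
Qed.

Lemma line_edge_pairs_at P : P \in line_edges E -> exists v, P \in edge_pairs_at v.
Proof.
rewrite inE => /andP[/andP[sub P2] /existsP[e1 /andP[e1P /existsP[e2 /andP[e2P]]]]].
case/andP=> e12; rewrite -setI_eq0 => /set0Pn[v]; rewrite inE => /andP[ve1 ve2].
exists v; rewrite inE P2 andbT.
have -> : P = [set e1; e2].
  apply/eqP; rewrite eq_sym eqEcard (eqP P2) cards2 e12 andbT.
  by apply/subsetP => e /set2P[]->.
by apply/subsetP => e /set2P[]->; apply/setIdP; split=> //; apply: (subsetP sub).
Qed.

Lemma edge_pairs_at_inj v v' P :
  P \in edge_pairs_at v -> P \in edge_pairs_at v' -> v = v'.
Proof.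
rewrite !inE => /andP[sub P2] /andP[sub' _].
case/cards2P: P2 => e1 [e2 [e12 dP]].
apply/eqP/negP => /negP vv'.
suff edge_vv' e : e \in P -> e = [set v; v'].
  have e1P : e1 \in P by rewrite dP !inE eqxx.
  have e2P : e2 \in P by rewrite dP !inE eqxx orbT.
  by move: e12; rewrite (edge_vv' e1 e1P) (edge_vv' e2 e2P) eqxx.
move=> eP; have /setIdP[eE ve] := subsetP sub e eP.
have /setIdP[_ v'e] := subsetP sub' e eP.
apply/esym/eqP; rewrite eqEcard (card_edge eE) cards2 vv' andbT.
by apply/subsetP => x /set2P[]->.
Qed.

Lemma num_line_edges_sum_bin : num_line_edges E = \sum_v 'C(deg E v, 2).
Proof.
transitivity (\sum_v #|edge_pairs_at v|); last first.
  by apply: eq_bigr => v _; rewrite -card_edges_at -cards_draws.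
rewrite /num_line_edges -sum1_card big_mkcond /=.
under [RHS]eq_bigr do rewrite -sum1_card big_mkcond /=.
rewrite exchange_big /=; apply: eq_bigr => P _; case: ifP => [PL|nPL].
  have [v Pv] := line_edge_pairs_at PL.
  rewrite (bigD1 v) //= Pv big1 // => v' v'v.
  by case: ifP => // /(edge_pairs_at_inj Pv) vv'; rewrite vv' eqxx in v'v.
by rewrite big1 // => v _; case: ifP => // /edge_pairs_at_line_edge; rewrite nPL.
Qed.

End SimpleGraph.

Section DeleteVertex.
Variables (V : finType) (R : rel V) (u : V).

Lemma sum_delete_vertex (F : V -> nat) :
  \sum_(x : {x | x != u}) F (val x) = \sum_(y | y != u) F y.
Proof. exact: esym (big_sub (predC1 u) F). Qed.

Lemma deg_delete_vertex (x : {x | x != u}) :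
  deg (relpre val R) x = deg R (val x) - R (val x) u.
Proof.
rewrite /deg -sum1dep_card -(big_sub_cond (predC1 u) (R (val x)) (fun=> 1)).
rewrite sum1dep_card [in RHS](cardsD1 u) inE addKn.
by apply: eq_card => y; rewrite !inE andbC.
Qed.

End DeleteVertex.

Lemma simple_relpre (T V : finType) (f : T -> V) (R : rel V) :
  simple_graph R -> simple_graph (relpre f R).
Proof. by case=> sym irr; split=> [x y|x]; [exact: sym | exact: irr]. Qed.

Lemma acyclic_relpre (T V : finType) (f : T -> V) (R : rel V) :
  injective f -> acyclic R -> acyclic (relpre f R).
Proof.
move=> f_inj acy s us s3; rewrite -cycle_map.
by apply: acy; rewrite ?map_inj_uniq ?size_map.
Qed.

Section AddEdge.
Variables (V : finType) (R : rel V) (a b : V).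

Definition add_edge : rel V :=
  fun x y => R x y || (x == a) && (y == b) || (x == b) && (y == a).

Lemma add_edge_simple : simple_graph R -> a != b -> simple_graph add_edge.
Proof.
case=> sym irr ab; split=> [x y|x]; rewrite /add_edge.
  by rewrite sym (andbC (x == a)) (andbC (x == b)) orbAC.
by rewrite irr /=; case: eqP => [->|_]; rewrite ?(negbTE ab) ?andbF.
Qed.

Lemma deg_add_edge x : symmetric R -> a != b -> ~~ R a b ->
  deg add_edge x = deg R x + (x == a) + (x == b).
Proof.
move=> sym ab nRab; rewrite /deg.
case: (eqVneq x a) => [->|xa].
  transitivity #|b |: [set y | R a y]|.
    by apply: eq_card => y; rewrite !inE /add_edge (negbTE ab) eqxx orbF orbC.
  by rewrite cardsU1 inE (negbTE nRab) (negbTE ab) addn0 addn1.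
case: (eqVneq x b) => [->|xb].
  transitivity #|a |: [set y | R b y]|.
    by apply: eq_card => y; rewrite !inE /add_edge eq_sym (negbTE ab) eqxx /= orbF orbC.
  by rewrite cardsU1 inE sym (negbTE nRab) addn0 addn1.
rewrite !addn0; apply: eq_card => y.
by rewrite !inE /add_edge (negbTE xa) (negbTE xb) !orbF.
Qed.

Lemma add_edge_avoiding x y : x != a -> y != a -> add_edge x y = R x y.
Proof. by move=> /negbTE xa /negbTE ya; rewrite /add_edge xa ya !andbF !orbF. Qed.

Lemma acyclic_add_edge :
  symmetric R -> acyclic R -> ~~ connect R a b -> acyclic add_edge.
Proof.
move=> sym acy nab s us s3; apply/negP => cs.
have avoid_a x y : x \in predC1 a -> y \in predC1 a -> add_edge x y -> R x y.
  by move=> xa ya; rewrite add_edge_avoiding.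
case: (boolP (a \in s)) => [as_|nas]; last first.
  by move: (acy s us s3); rewrite (sub_in_cycle avoid_a _ cs) // all_predC has_pred1.
(* Rotate the cycle to start at [a]: only its two steps at [a] can be new. *)
case: (rot_to as_) => i r rot_s.
move: us s3 cs; rewrite -(rot_uniq i) -(size_rot i) -(rot_cycle i) rot_s.
case: r {rot_s} => [|h q] // us; rewrite /= !ltnS => q1 /andP[Rah].
have lq : last h q \in q by case: q {us} q1 => // h2 q _ /=; apply: mem_last.
set l := last h q in lq *; rewrite rcons_path => /andP[hq Rla].
have [nahq nhq _] := and3P us.
have ha : h != a by apply: contraNneq nahq => ->; rewrite mem_head.
have la : l != a by apply: contraNneq nahq => <-; rewrite inE lq orbT.
have hl : h != l by apply: contraNneq nhq => ->.
have Rhq : path R h q.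
  by apply: (sub_in_path avoid_a) hq; apply/allP => y; apply: contraTneq => ->.
have c_hl : connect R h l by apply/connectP; exists q.
move: Rah Rla; rewrite /add_edge eqxx (negbTE ha) (negbTE la) !andbF /= andbT !orbF.
case/orP=> [Rah|/eqP hb] /orP[Rla|/eqP lb].
- by move: (acy _ us q1); rewrite /= rcons_path Rah Rhq Rla.
- by move: nab; rewrite -lb (connect_trans (connect1 Rah) c_hl).
- move: nab; rewrite (sym_connect_sym sym) -hb.
  by rewrite (connect_trans c_hl (connect1 Rla)).
- by move: hl; rewrite /l lb hb eqxx.
Qed.

End AddEdge.

Section Leaves.
Variables (V : finType) (E : rel V).
Hypotheses (irr : irreflexive E) (acy : acyclic E).

(* [last x (belast x p)] is the vertex preceding the endpoint of [x :: p]. *)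
Lemma path_end_neighbor x p t : uniq (x :: p) -> path E x p ->
  t \in x :: p -> E (last x p) t -> t = last x (belast x p).
Proof.
move=> + + tp; case/splitPl: p / tp => p1 p2 tl.
rewrite -cat_cons cat_uniq cat_path last_cat tl => /and3P[_ tp2 up2] /andP[_ path2] Et.
have ut : uniq (t :: p2).
  rewrite /= up2 andbT; apply: contra tp2 => t_p2.
  by apply/hasP; exists t; rewrite // -tl mem_last.
have : size (t :: p2) < 3.
  rewrite ltnNge; apply/negP => p23.
  by have /negP := acy ut p23; rewrite /= rcons_path path2 Et.
case: p2 {tp2 up2 path2 ut} Et => [|z [|]] //=; first by rewrite irr.
by move=> _ _; rewrite belast_cat last_cat tl.
Qed.

Hypothesis noi : no_isolated E.

(* Extend a simple path from [a] while its endpoint has a neighbour off the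
   path; by [path_end_neighbor] the endpoint is then a leaf. *)
Lemma connect_leaf a : exists2 z, connect E a z & deg E z = 1.
Proof.
suff leaf_after p :
    uniq (a :: p) -> path E a p -> exists2 z, connect E a z & deg E z = 1.
  exact: (leaf_after [::]).
have [n] := ubnP (#|V| - size p); elim: n p => // n IH p lt_n up ap.
set z := last a p.
have size_p : size (a :: p) <= #|V| by rewrite -(card_uniqP up) max_card.
have extend t : E z t -> t \notin a :: p -> exists2 z, connect E a z & deg E z = 1.
  move=> Ezt tp; apply: (IH (rcons p t)).
  - by rewrite size_rcons subnS -ltnS prednK // subn_gt0.
  - by rewrite -rcons_cons rcons_uniq tp.
  - by rewrite rcons_path ap.
case: (leqP (deg E z) 1) => [dz|/card_gt1P[t1 [t2]]].
  by exists z; [apply/connectP; exists p | apply/eqP; rewrite eqn_leq dz noi].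
rewrite !inE => -[Ezt1 Ezt2 t12].
case: (boolP (t1 \in a :: p)) => [t1p|]; last exact: extend.
case: (boolP (t2 \in a :: p)) => [t2p|]; last exact: extend.
by move: t12; rewrite (path_end_neighbor up ap t1p) // (path_end_neighbor up ap t2p) ?eqxx.
Qed.

End Leaves.

Lemma deg_eq1_neighbor (V : finType) (E : rel V) x :
  deg E x = 1 -> exists y, forall z, E x z = (z == y).
Proof. by move/eqP/cards1P=> [y Nx]; exists y => z; rewrite -in_set1 -Nx inE. Qed.

Section Rewire.
Variables (V : finType) (E : rel V).
Hypotheses (E_simple : simple_graph E) (acy : acyclic E) (noi : no_isolated E).
Variables (u u' w : V).
Hypotheses (leaf_u : forall y, E u y = (y == u')) (leaf_w : deg E w = 1).
Hypothesis nc_uw : ~~ connect E u w.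

Definition rewired : rel {x | x != u} := relpre val (add_edge E u' w).

Let sym : symmetric E. Proof. by case: E_simple. Qed.
Let irr : irreflexive E. Proof. by case: E_simple. Qed.

Let u_neq_w : u != w.
Proof. by apply: contraNneq nc_uw => ->; rewrite connect0. Qed.

Let deg_u : deg E u = 1.
Proof.
by rewrite /deg -(cards1 u'); apply: eq_card => y; rewrite !inE leaf_u.
Qed.

Let nc_u'w : ~~ connect E u' w.
Proof. by apply: contra nc_uw; apply: connect_trans; rewrite connect1 ?leaf_u. Qed.

Let u'_neq_w : u' != w.
Proof. by apply: contraNneq nc_u'w => ->; rewrite connect0. Qed.

Lemma deg_rewired x : deg rewired x = deg E (val x) + (val x == w).
Proof.
have u_u' : u != u' by rewrite -leaf_u irr.
rewrite deg_delete_vertex deg_add_edge //; last by apply: contra nc_u'w; apply: connect1.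
rewrite /add_edge sym leaf_u (negbTE u_neq_w) eq_sym (negbTE u_u') !andbF !orbF.
by rewrite addnAC addnK.
Qed.

Lemma sum_rewired (F : V -> nat) :
  \sum_(x : {x | x != u}) (F (val x) + (val x == w)) + F u = \sum_y F y + 1.
Proof.
rewrite (sum_delete_vertex u (fun y => F y + (y == w))) big_split /=.
have -> : \sum_(y | y != u) (y == w) = 1.
  by rewrite (bigD1 w) 1?eq_sym //= eqxx big1 // => y /andP[_ /negbTE ->].
by rewrite [\sum_y F y](bigD1 u) //=; lia.
Qed.

Lemma rewired_simple : simple_graph rewired.
Proof. exact/simple_relpre/add_edge_simple. Qed.

Lemma num_edges_rewired : num_edges rewired = num_edges E.
Proof.
have := sum_rewired (deg E); rewrite -(eq_bigr _ (fun x _ => deg_rewired x)).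
rewrite (handshake rewired_simple) (handshake E_simple) deg_u; lia.
Qed.

Lemma num_line_edges_rewired : num_line_edges rewired = (num_line_edges E).+1.
Proof.
have := sum_rewired (fun y => 'C(deg E y, 2)).
have bin_deg x : 'C(deg rewired x, 2) = 'C(deg E (val x), 2) + (val x == w).
  by rewrite deg_rewired; case: eqP => [->|_]; rewrite ?leaf_w ?addn0.
rewrite -(eq_bigr _ (fun x _ => bin_deg x)) deg_u.
rewrite (num_line_edges_sum_bin rewired_simple) (num_line_edges_sum_bin E_simple).
by rewrite !addn0 addn1.
Qed.

Lemma max_deg_rewired : 2 <= max_deg E -> max_deg rewired = max_deg E.
Proof.
move=> D2; apply/eqP; rewrite eqn_leq; apply/andP; split.
  apply/bigmax_leqP => x _; rewrite deg_rewired.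
  by case: eqP => [->|_]; rewrite ?leaf_w ?addn0 ?leq_bigmax.
have [v Dv] : {v | max_deg E = deg E v} by apply: eq_bigmax; apply/card_gt0P; exists u.
have v_neq_u : v != u by apply: contraTneq D2 => v_u; rewrite Dv v_u deg_u.
apply: leq_trans (@leq_bigmax _ (deg rewired) (Sub v v_neq_u)).
by rewrite Dv deg_rewired leq_addr.
Qed.

Lemma rewired_acyclic : acyclic rewired.
Proof. exact/acyclic_relpre/acyclic_add_edge/nc_u'w/acy/sym/val_inj. Qed.

Lemma rewired_no_isolated : no_isolated rewired.
Proof. by move=> x; rewrite deg_rewired (leq_trans (noi (val x)) (leq_addr _ _)). Qed.

Lemma rewired_admissible N D : 2 <= D -> num_edges E = N -> max_deg E = D ->
  admissible N D rewired.
Proof.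
move=> D2 EN ED; split; first exact: rewired_simple.
split; first exact: rewired_acyclic.
rewrite num_edges_rewired max_deg_rewired ?ED //.
by split=> //; split=> //; exact: rewired_no_isolated.
Qed.

End Rewire.

Theorem mainTheorem6 (N D : nat) (V : finType) (E : rel V) :
  2 <= D -> D <= N ->
  simple_graph E -> acyclic E -> no_isolated E ->
  num_edges E = N -> max_deg E = D ->
  is_g N D (num_line_edges E) ->
  is_tree E.
Proof.
move=> D2 _ E_simple acy noi EN ED [_ g_max]; split=> // a b.
have [sym irr] := E_simple.
apply/idPn => nc_ab.
have [u au /deg_eq1_neighbor[u' leaf_u]] := connect_leaf irr acy noi a.
have [w bw leaf_w] := connect_leaf irr acy noi b.
have nc_uw : ~~ connect E u w.
  apply: contra nc_ab => uw; rewrite (connect_trans au) // (connect_trans uw) //.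
  by rewrite (sym_connect_sym sym).
have := g_max _ _ (rewired_admissible E_simple acy noi leaf_u leaf_w nc_uw D2 EN ED).
by rewrite num_line_edges_rewired // ltnn.
Qed.
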